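(* Let $\theta>0$ and $\gamma:=\frac{\sqrt{2\theta}(1+i)}{2}$. If $S=\sum_{p=0}^\infty a_{p,p}\gamma^{-2p}x^py^p\in A^\infty(\mathbb{R}^2_\theta)$ satisfies $S^2=S=S^*$, then $S=0$ or $S=1$.
   Context: $A^\infty(\mathbb{R}^2_\theta)$ is the algebra of formal series $\sum_{p,q\geq 0}c_{p,q}x^py^q$ with complex coefficients of Schwartz class on $\mathbb{N}^2$ (for every $r\geq1$, $\sup_{p,q}(1+p^2+q^2)^r|c_{p,q}|<\infty$), where $x,y$ are self-adjoint with $yx=xy+i\theta$ (i.e. $[x,y]=-i\theta$); products are computed by reordering into the normal form $x^py^q$ via this relation, and $(c\,x^py^q)^*=\bar c\,y^qx^p$. *)

From HB Require Import structures.
From mathcomp Require Import all_boot all_order all_algebra.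
From mathcomp Require Import reals.
From mathcomp.real_closed Require Import complex.
Set Implicit Arguments. Unset Strict Implicit. Unset Printing Implicit Defensive.
Import Order.TTheory GRing.Theory Num.Theory.
Local Open Scope ring_scope.
Local Open Scope complex_scope.

(* A formal series  sum_{p,q>=0} c p q x^p y^q  is represented by its
   coefficient function c : nat -> nat -> R[i]. *)
Definition fseries (R : realType) := nat -> nat -> R[i].

Definition schwartz (R : realType) (c : fseries R) : Prop :=
  forall r : nat, (1 <= r)%N ->
    exists M : R, forall p q : nat,
      ((1 + p ^ 2 + q ^ 2) ^ r)%:R * Normc.normc (c p q) <= M.

Definition in_Ainf (R : realType) (c : fseries R) : Prop := schwartz c.

Definition series_to (R : realType) (u : nat -> R[i]) (l : R[i]) : Prop :=
  forall e : R, 0 < e -> exists N : nat, forall n : nat, (N <= n)%N ->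
    Normc.normc (\sum_(k < n) u k - l) < e.

(* i*theta, the commutator constant: y x = x y + i theta *)
Definition itheta (R : realType) (theta : R) : R[i] := theta%:C * 'i.

(* Normal ordering:  y^q x^r = sum_k k! C(q,k) C(r,k) (i theta)^k x^(r-k) y^(q-k).
   Coefficient of x^m y^n in (sum A_{p,q} x^p y^q)(sum B_{r,s} x^r y^s):
   parametrised by p <= m, s <= n, k >= 0 with q = n-s+k, r = m-p+k;
   this is a series in k with finite inner sums. *)
Definition mul_term (R : realType) (theta : R) (A B : fseries R) (m n k : nat) : R[i] :=
  \sum_(p < m.+1) \sum_(s < n.+1)
    A p (n - s + k)%N * B (m - p + k)%N s
    * (k`! * 'C(n - s + k, k) * 'C(m - p + k, k))%:R * itheta theta ^+ k.

Definition is_mul (R : realType) (theta : R) (A B P : fseries R) : Prop :=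
  forall m n : nat, series_to (mul_term theta A B m n) (P m n).

(* (c x^p y^q)^* = conj c y^q x^p, reordered into normal form:
   coefficient of x^m y^n in A^* *)
Definition star_term (R : realType) (theta : R) (A : fseries R) (m n k : nat) : R[i] :=
  conjc (A (m + k)%N (n + k)%N) * (k`! * 'C(n + k, k) * 'C(m + k, k))%:R
    * itheta theta ^+ k.

Definition is_star (R : realType) (theta : R) (A D : fseries R) : Prop :=
  forall m n : nat, series_to (star_term theta A m n) (D m n).

Definition fs0 (R : realType) : fseries R := fun _ _ => 0.
Definition fs1 (R : realType) : fseries R :=
  fun p q => if (p == 0%N) && (q == 0%N) then 1 else 0.

Definition gamma (R : realType) (theta : R) : R[i] :=
  (Num.sqrt (2 * theta))%:C * (1 + 'i) / 2.

Definition diagS (R : realType) (theta : R) (a : nat -> R[i]) : fseries R :=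
  fun p q => if p == q then a p * (gamma theta ^+ (2 * p))^-1 else 0.

From HB Require Import structures.
From mathcomp Require Import all_boot all_order all_algebra.
From mathcomp Require Import reals.
From mathcomp.real_closed Require Import complex.
From mathcomp Require Import zify ring.
Import Order.TTheory GRing.Theory Num.Theory.

Set Implicit Arguments.
Unset Strict Implicit.
Unset Printing Implicit Defensive.

Local Open Scope ring_scope.

(* Write S_pp = a_p (i theta)^-p, which is possible because gamma^2 = i theta.
   By the normal-ordering rule, S^2 = S becomes a = a * a for a commutative
   product * of sequences, and the identity
   (x)_p (x)_q = sum_k k! C(p,k) C(q,k) (x)_(p+q-k) for falling factorials
   makes lambda_j = sum_p a_p (j)_p multiplicative for *.  Hence every
   lambda_j is 0 or 1; as lambda_j = sum_p a_p p! C(j,p), all a_p p! are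
   integers.  The (0,0) coefficient of S^* = S is a convergent series whose
   k-th term has modulus |a_k| k!, so a_k = 0 for large k.  Then lambda_j is
   a polynomial in j that is idempotent at every natural number, hence
   constant, equal to lambda_0 = a_0; this forces a_p = 0 for p > 0 and
   a_0 in {0, 1}. *)

Lemma big_ord_widen_eq0 (V : nmodType) (n m : nat) (F : nat -> V) :
  (n <= m)%N -> (forall i, (n <= i < m)%N -> F i = 0) ->
  \sum_(i < n) F i = \sum_(i < m) F i.
Proof.
move=> le_nm F0; rewrite (big_ord_widen m F le_nm) big_mkcond /=.
by apply: eq_bigr => i _; case: ltnP => // le_ni; rewrite F0 // le_ni ltn_ord.
Qed.

Definition pairings (p s k : nat) : nat := k`! * 'C(p, k) * 'C(s, k).

Lemma pairings_eq0 p s k : (p < k)%N || (s < k)%N -> pairings p s k = 0%N.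
Proof. by case/orP => lt_k; rewrite /pairings (bin_small lt_k) ?muln0 ?mul0n. Qed.

Section FallingFactorial.
Variable C : comPzRingType.
Implicit Types x : C.

Definition ffactr x (m : nat) : C := \prod_(i < m) (x - i%:R).

Lemma ffactr0 x : ffactr x 0 = 1.
Proof. by rewrite /ffactr big_ord0. Qed.

Lemma ffactrS x m : ffactr x m.+1 = ffactr x m * (x - m%:R).
Proof. by rewrite /ffactr big_ord_recr. Qed.

Lemma ffactr_nat n m : ffactr n%:R m = (n ^_ m)%:R.
Proof.
elim: m => [|m IHm]; first by rewrite ffactr0 ffactn0.
rewrite ffactrS IHm ffactnSr natrM; case: (leqP m n) => [le_mn|lt_nm].
  by rewrite natrB.
by rewrite ffact_small // !mul0r.
Qed.

Lemma ffactr_nat_small j m : (j < m)%N -> ffactr j%:R m = 0.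
Proof. by move=> lt_jm; rewrite ffactr_nat ffact_small. Qed.

Lemma ffactr_mul x p q : ffactr x p * ffactr x q =
  \sum_(k < p.+1) (pairings p q k)%:R * ffactr x (p + q - k).
Proof.
rewrite /pairings.
elim: q => [|q IHq].
  rewrite ffactr0 mulr1 big_ord_recl big1 => [|k _]; last by rewrite bin0n muln0 mul0r.
  by rewrite fact0 !bin0 subn0 addn0 mul1r addr0.
(* x - q = (x - (p + q - k)) + (p - k) splits each term of the induction hypothesis in two *)
have split_term (k : 'I_p.+1) :
    (k`! * 'C(p, k) * 'C(q, k))%:R * ffactr x (p + q - k) * (x - q%:R) =
    (k`! * 'C(p, k) * 'C(q, k))%:R * ffactr x (p + q.+1 - k) +
    (k`! * 'C(p, k) * 'C(q, k) * (p - k))%:R * ffactr x (p + q - k).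
  have le_kp : (k <= p)%N by rewrite -ltnS.
  have -> : (p + q.+1 - k = (p + q - k).+1)%N by lia.
  rewrite ffactrS natrM.
  have -> : (p + q - k)%:R = q%:R + (p - k)%:R :> C by rewrite -natrD; congr _%:R; lia.
  ring.
rewrite ffactrS mulrA IHq mulr_suml (eq_bigr _ (fun k _ => split_term k)) big_split /=.
rewrite big_ord_recl [in RHS]big_ord_recl !bin0 -addrA; congr (_ + _).
rewrite [X in _ + X = _]big_ord_recr /= subnn muln0 mul0r addr0 -big_split /=.
(* Pascal's rule for 'C(q.+1, k.+1) and (k+1) 'C(p, k+1) = (p-k) 'C(p, k) absorb the second sum. *)
apply: eq_bigr => k _; rewrite /bump /= add1n binS mulnDr natrD mulrDl; congr (_ + _).
have -> : (p + q.+1 - k.+1 = p + q - k)%N by lia.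
have := mul_bin_left p k; rewrite factS => bin_left.
by congr (_%:R * _); rewrite [in RHS](mulnC k.+1) -[in RHS](mulnA k`!) bin_left; ring.
Qed.

End FallingFactorial.

Section DiagonalProduct.
Variable C : comPzRingType.
Implicit Types a b : nat -> C.

(* (x^p y^p)(x^s y^s) = sum_k pairings p s k (i theta)^k x^(p+s-k) y^(p+s-k);
   with the coefficients rescaled by (i theta)^p the powers of i theta cancel. *)
Definition diag_term a b (n k p s : nat) : C :=
  if (p + s == n + k)%N then a p * b s * (pairings p s k)%:R else 0.

Definition diag_mul_coef a b n k : C :=
  \sum_(p < n.+1) \sum_(s < n.+1) diag_term a b n k p s.

Definition diag_mul a b n : C := \sum_(k < n.+1) diag_mul_coef a b n k.

Definition diag_eval a (j : nat) : C := \sum_(p < j.+1) a p * ffactr j%:R p.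

Lemma diag_term_eq0 a b n k p s :
  (n < p)%N || (n < s)%N || (n < k)%N -> diag_term a b n k p s = 0.
Proof.
rewrite /diag_term; case: eqP => // sum_eq out.
by rewrite pairings_eq0 ?mulr0 //; lia.
Qed.

Lemma diag_mul_coef_widen a b n k M : (n < M)%N ->
  diag_mul_coef a b n k = \sum_(p < M) \sum_(s < M) diag_term a b n k p s.
Proof.
move=> lt_nM; rewrite /diag_mul_coef.
rewrite (big_ord_widen_eq0 (F := fun p => \sum_(s < n.+1) diag_term a b n k p s) lt_nM)
  => [|p /andP[lt_np _]]; last first.
  by rewrite big1 // => s _; rewrite diag_term_eq0 // lt_np.
apply: eq_bigr => p _; apply: big_ord_widen_eq0 => // s /andP[lt_ns _].
by rewrite diag_term_eq0 // lt_ns orbT.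
Qed.

Lemma diag_mul_coef_eq0 a b n k : (n < k)%N -> diag_mul_coef a b n k = 0.
Proof.
by move=> lt_nk; apply: big1 => p _; apply: big1 => s _;
  rewrite diag_term_eq0 // lt_nk !orbT.
Qed.

Lemma diag_mul_widen a b n M : (n < M)%N ->
  diag_mul a b n = \sum_(k < M) diag_mul_coef a b n k.
Proof.
move=> lt_nM; apply: big_ord_widen_eq0 => // k /andP[lt_nk _].
exact: diag_mul_coef_eq0.
Qed.

Lemma diag_eval_widen a j M : (j < M)%N ->
  diag_eval a j = \sum_(p < M) a p * ffactr j%:R p.
Proof.
move=> lt_jM; apply: (big_ord_widen_eq0 (F := fun p => a p * ffactr j%:R p)) => //.
move=> p /andP[lt_jp _].
by rewrite ffactr_nat_small ?mulr0.
Qed.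

Lemma sum_diag_term a b j k p s M : (j < M)%N ->
  \sum_(n < M) diag_term a b n k p s * ffactr j%:R n =
  a p * b s * (pairings p s k)%:R * ffactr j%:R (p + s - k).
Proof.
move=> lt_jM; case: (leqP k p) => [le_kp | lt_pk]; last first.
  rewrite pairings_eq0 ?lt_pk // mulr0 mul0r big1 // => n _.
  by rewrite /diag_term pairings_eq0 ?lt_pk // mulr0 if_same mul0r.
have term_eq0 (n : nat) : n != (p + s - k)%N -> diag_term a b n k p s = 0.
  by move=> ne_n; rewrite /diag_term ifN //; apply: contra ne_n => /eqP sum_eq; apply/eqP; lia.
case: (ltnP (p + s - k) M) => [lt_M | le_M].
  rewrite (bigD1 (Ordinal lt_M)) //= big1 => [|n ne_n]; last first.
    by rewrite term_eq0 ?mul0r.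
  by rewrite addr0 /diag_term ifT //; apply/eqP; lia.
rewrite ffactr_nat_small ?mulr0; last exact: leq_trans lt_jM le_M.
rewrite big1 // => n _; rewrite term_eq0 ?mul0r //.
by rewrite neq_ltn (leq_trans (ltn_ord n) le_M).
Qed.

Lemma diag_eval_mul a b j :
  diag_eval (diag_mul a b) j = diag_eval a j * diag_eval b j.
Proof.
transitivity (\sum_(p < j.+1) \sum_(s < j.+1) \sum_(k < j.+1)
    a p * b s * (pairings p s k)%:R * ffactr j%:R (p + s - k)).
  rewrite /diag_eval (eq_bigr _ (fun n _ => congr1 (fun z => z * _)
    (diag_mul_widen a b (ltn_ord n)))).
  under eq_bigr => n _.
    rewrite mulr_suml; under eq_bigr => k _.
      rewrite (diag_mul_coef_widen _ _ _ (ltn_ord n)) mulr_suml.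
      under eq_bigr do rewrite mulr_suml.
    over.
  over.
  rewrite exchange_big /=; under eq_bigr => k _.
    rewrite exchange_big /=; under eq_bigr do rewrite exchange_big /=.
  over.
  rewrite exchange_big /=; apply: eq_bigr => p _.
  rewrite exchange_big /=; apply: eq_bigr => s _; apply: eq_bigr => k _.
  exact: sum_diag_term (ltnSn j).
rewrite /diag_eval big_distrlr /=; apply: eq_bigr => p _; apply: eq_bigr => s _.
rewrite mulrACA ffactr_mul mulr_sumr.
rewrite (big_ord_widen_eq0 (F := fun k => a p * b s * ((pairings p s k)%:R *
  ffactr j%:R (p + s - k))) (ltn_ord p)) => [|k /andP[lt_pk _]].
  by apply: eq_bigr => k _; rewrite mulrA.
by rewrite pairings_eq0 ?lt_pk // mul0r mulr0.
Qed.

Lemma diag_eval0 a : diag_eval a 0 = a 0.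
Proof. by rewrite /diag_eval big_ord1 ffactr0 mulr1. Qed.

Lemma diag_eval_binomial a j :
  diag_eval a j = \sum_(p < j.+1) a p * p`!%:R * 'C(j, p)%:R.
Proof.
by apply: eq_bigr => p _; rewrite ffactr_nat -bin_ffact natrM mulrA mulrAC.
Qed.

Lemma diag_eval_idem a j :
  (forall n, a n = diag_mul a a n) -> diag_eval a j ^+ 2 = diag_eval a j.
Proof.
by move=> a_idem; rewrite expr2 -diag_eval_mul; apply: eq_bigr => p _; rewrite -a_idem.
Qed.

End DiagonalProduct.

Lemma horner_ffactr (C : comNzRingType) (x : C) m : (ffactr 'X m).[x] = ffactr x m.
Proof. by rewrite horner_prod; apply: eq_bigr => i _; rewrite -polyC_natr hornerXsubC. Qed.

Lemma mulr_fact_eq0 (C : numDomainType) (z : C) n : (z * n`!%:R == 0) = (z == 0).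
Proof. by rewrite mulf_eq0 pnatr_eq0 -leqn0 leqNgt fact_gt0 orbF. Qed.

Lemma idem_eq01 (C : idomainType) (z : C) : z ^+ 2 = z -> z = 0 \/ z = 1.
Proof.
move=> z_idem; have /eqP : z * (z - 1) = 0 by rewrite mulrBr mulr1 -expr2 z_idem subrr.
by rewrite mulf_eq0 subr_eq0 => /orP[] /eqP ->; [left | right].
Qed.

Lemma intr_norm_lt1 (C : numDomainType) (m : int) : `|m%:~R : C| < 1 -> m = 0.
Proof. by rewrite -intr_norm ltrz1; lia. Qed.

Lemma poly_idem_nat_const (C : numDomainType) (L : {poly C}) :
  (forall j : nat, L.[j%:R] ^+ 2 = L.[j%:R]) -> L = (L`_0)%:P.
Proof.
move=> L_idem; have idem : L * L = L.
  apply/eqP; rewrite -subr_eq0; set P := L * L - L; apply/negPn/negP => nz.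
  suff : (size P < size P)%N by rewrite ltnn.
  rewrite -[X in (X < _)%N](size_iota 0) -(size_map (fun j : nat => j%:R : C)).
  apply: (max_poly_roots nz).
    by apply/allP => _ /mapP[j _ ->]; rewrite /root !hornerE -expr2 L_idem subrr.
  by rewrite map_inj_uniq ?iota_uniq // => i j /eqP; rewrite eqr_nat => /eqP.
apply: size1_polyC; have [->|nz] := eqVneq L 0; first by rewrite size_poly0.
have := congr1 (fun q : {poly C} => size q) idem; rewrite size_mul //.
by case: (size L) => // n; rewrite addSn /=; lia.
Qed.

Section IdempotentEval.
Variable C : numDomainType.
Variable a : nat -> C.
Hypothesis eval_idem : forall j, diag_eval a j ^+ 2 = diag_eval a j.

Lemma diag_coef_fact_int p : exists m : int, a p * p`!%:R = m%:~R.
Proof.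
elim/ltn_ind: p => p IH.
have [e eval_p] : exists e : int, diag_eval a p = e%:~R.
  by case: (idem_eq01 (eval_idem p)) => ->; [exists 0 | exists 1].
have [s sum_p] : exists s : int, \sum_(i < p) a i * i`!%:R * 'C(p, i)%:R = s%:~R.
  apply: (big_ind (fun z => exists m : int, z = m%:~R)) => [|_ _ [m1 ->] [m2 ->]|i _].
  - by exists 0.
  - by exists (m1 + m2); rewrite intrD.
  - by have [m ->] := IH i (ltn_ord i); exists (m * 'C(p, i)); rewrite intrM.
exists (e - s); rewrite intrB -eval_p -sum_p diag_eval_binomial big_ord_recr /=.
by rewrite binn mulr1 addrAC subrr add0r.
Qed.

Hypothesis coef_fact_small :
  exists N, forall n, (N <= n)%N -> `|a n * n`!%:R| < 1.

Lemma diag_coef_eventually_eq0 : exists N, forall n, (N <= n)%N -> a n = 0.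
Proof.
have [N small_N] := coef_fact_small; exists N => n le_Nn.
have [m am] := diag_coef_fact_int n.
move: (small_N n le_Nn); rewrite am => /intr_norm_lt1 m0.
by apply/eqP; rewrite -(mulr_fact_eq0 _ n) am m0.
Qed.

Lemma diag_eval_const j : diag_eval a j = a 0.
Proof.
have [N a_eq0] := diag_coef_eventually_eq0.
pose L : {poly C} := \sum_(p < N) a p *: ffactr 'X p.
have eval_L i : diag_eval a i = L.[i%:R].
  rewrite horner_sum (diag_eval_widen _ (leq_addl N i.+1)).
  under [RHS]eq_bigr do rewrite hornerZ horner_ffactr.
  symmetry; apply: (big_ord_widen_eq0 (F := fun p => a p * ffactr i%:R p)) => [|p /andP[]].
    exact: leq_addr.
  by move=> le_Np _; rewrite a_eq0 ?mul0r.
have L_const : L = (L`_0)%:P by apply: poly_idem_nat_const => i; rewrite -eval_L eval_idem.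
by rewrite -diag_eval0 !eval_L L_const !hornerC.
Qed.

Lemma diag_coef_eq0 p : (0 < p)%N -> a p = 0.
Proof.
elim/ltn_ind: p => -[//|p] IH _.
have := diag_eval_const p.+1; rewrite diag_eval_binomial big_ord_recr big_ord_recl /=.
rewrite big1 => [|i _]; last by rewrite IH ?mul0r // /bump /= ltnS.
rewrite fact0 bin0 binn !mulr1 addr0 addrC => /eqP.
by rewrite -subr_eq0 addrK mulr_fact_eq0 => /eqP.
Qed.

Lemma diag_coef0_eq01 : a 0 = 0 \/ a 0 = 1.
Proof. by apply: idem_eq01; rewrite -diag_eval0 eval_idem. Qed.

End IdempotentEval.

Lemma normc_normr (R : rcfType) (z : R[i]) : (Normc.normc z)%:C%C = `|z|.
Proof. by []. Qed.

Lemma normc_ltE (R : rcfType) (z : R[i]) (e : R) :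
  (Normc.normc z < e) = (`|z| < e%:C%C).
Proof. by rewrite -ltcR normc_normr. Qed.

Lemma normr_conjc (R : rcfType) (z : R[i]) : `|conjc z| = `|z|.
Proof. by case: z => x y; rewrite !normc_def /= sqrrN. Qed.

Section Series.
Variable R : realType.
Implicit Types (u : nat -> R[i]) (l : R[i]).

Lemma series_to_finite u l N : series_to u l ->
  (forall k, (N <= k)%N -> u k = 0) -> l = \sum_(k < N) u k.
Proof.
move=> u_l u_eq0; apply/eqP; rewrite eq_sym -subr_eq0; apply/negPn/negP => nz.
have /u_l[M near_l] : 0 < Normc.normc (\sum_(k < N) u k - l).
  by rewrite -ltcR normc_normr normr_gt0.
have := near_l (N + M)%N (leq_addl _ _).
rewrite -(big_ord_widen_eq0 (leq_addr M N)) ?ltxx // => k /andP[le_Nk _].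
exact: u_eq0.
Qed.

Lemma series_to_term_small u l e : series_to u l -> 0 < e ->
  exists N, forall n, (N <= n)%N -> `|u n| < e%:C%C.
Proof.
move=> u_l e_gt0; have [N near_l] := u_l (e / 2) (divr_gt0 e_gt0 (ltr0Sn _ 1)).
exists N => n le_Nn.
have -> : u n = (\sum_(k < n.+1) u k - l) - (\sum_(k < n) u k - l).
  by rewrite big_ord_recr /=; ring.
rewrite (splitr e) rmorphD /=; apply: le_lt_trans (ler_normB _ _) _.
by rewrite ltrD // -normc_ltE near_l // ltnW.
Qed.

End Series.

Section DiagonalSeries.
Variables (R : realType) (theta : R).
Hypothesis theta_gt0 : 0 < theta.
Variable a : nat -> R[i].
Local Notation t := (itheta theta).
Local Notation S := (diagS theta a).

Lemma gamma_sqr : gamma theta ^+ 2 = t.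
Proof.
have sqrt_sqr : (Num.sqrt (2 * theta))%:C%C ^+ 2 = 2 * theta%:C%C :> R[i].
  by rewrite -rmorphXn /= sqr_sqrtr ?mulr_ge0 ?ler0n ?ltW // rmorphM /= rmorph_nat.
have i_sqr : (1 + 'i) ^+ 2 = 2 * 'i :> R[i] by rewrite sqrrD sqrCi expr1n; ring.
by rewrite /gamma /itheta !exprMn sqrt_sqr i_sqr exprVn; field.
Qed.

Lemma norm_itheta : `|t| = theta%:C%C.
Proof.
by rewrite /itheta normrM normCi mulr1 ger0_norm // ler0c ltW.
Qed.

Lemma itheta_neq0 : t != 0.
Proof. by rewrite -normr_gt0 norm_itheta ltcR. Qed.

Lemma diagS_diag p : S p p = a p / t ^+ p.
Proof. by rewrite /diagS eqxx exprM gamma_sqr. Qed.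

Lemma mul_term_diagS n k :
  mul_term theta S S n n k = diag_mul_coef a a n k / t ^+ n.
Proof.
rewrite /mul_term /diag_mul_coef mulr_suml; apply: eq_bigr => -[p /= lt_pn] _.
rewrite mulr_suml; apply: eq_bigr => -[s /= lt_sn] _; rewrite /diag_term.
case: eqP => [sum_eq | sum_neq]; last first.
  by rewrite /diagS ifN ?mul0r //; move/eqP: sum_neq; lia.
have -> : (n - s + k = p)%N by lia.
have -> : (n - p + k = s)%N by lia.
have tX_ratio : t ^+ k / (t ^+ p * t ^+ s) = (t ^+ n)^-1.
  by rewrite -!exprD sum_eq exprD invfM mulrCA divff ?mulr1 // expf_neq0 // itheta_neq0.
by rewrite !diagS_diag -tX_ratio invfM /pairings; ring.
Qed.

Lemma is_mul_diagS : is_mul theta S S S -> forall n, a n = diag_mul a a n.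
Proof.
move=> S_idem n.
have : S n n = \sum_(k < n.+1) mul_term theta S S n n k.
  apply: series_to_finite (S_idem n n) _ => k lt_nk.
  by rewrite mul_term_diagS diag_mul_coef_eq0 ?mul0r.
rewrite diagS_diag; under eq_bigr do rewrite mul_term_diagS.
by rewrite -mulr_suml => /(mulIf (invr_neq0 (expf_neq0 n itheta_neq0))).
Qed.

Lemma norm_star_term_diagS k :
  `|star_term theta S 0 0 k| = `|a k * k`!%:R|.
Proof.
rewrite /star_term !add0n binn !muln1 diagS_diag !normrM normr_conjc !normrM normfV !normrX.
by rewrite norm_itheta mulrAC divfK // expf_neq0 // gt_eqF // ltcR.
Qed.

Lemma is_star_diagS_small : is_star theta S S ->
  exists N, forall n, (N <= n)%N -> `|a n * n`!%:R| < 1.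
Proof.
move=> S_star; have [N small_N] := series_to_term_small (S_star 0%N 0%N) ltr01.
by exists N => n /small_N; rewrite norm_star_term_diagS.
Qed.

Lemma diagS_const c : (forall p, (0 < p)%N -> a p = 0) -> a 0 = c ->
  S = fun p q => if (p == 0%N) && (q == 0%N) then c else 0.
Proof.
move=> a_eq0 a0; apply: boolp.funext => p; apply: boolp.funext => q; rewrite /diagS.
case: eqP => [<-|]; last by case: p q => [|p] [|q].
by case: p => [|p]; rewrite ?a0 ?muln0 ?expr0 ?invr1 ?mulr1 // a_eq0 ?mul0r.
Qed.

End DiagonalSeries.

Theorem proposition3p2 (R : realType) (theta : R) (a : nat -> R[i]) :
  0 < theta ->
  in_Ainf (diagS theta a) ->
  is_mul theta (diagS theta a) (diagS theta a) (diagS theta a) ->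
  is_star theta (diagS theta a) (diagS theta a) ->
  diagS theta a = fs0 R \/ diagS theta a = fs1 R.
Proof.
move=> theta_gt0 _ S_idem S_star.
have eval_idem j := diag_eval_idem j (is_mul_diagS theta_gt0 S_idem).
have a_eq0 := diag_coef_eq0 eval_idem (is_star_diagS_small theta_gt0 S_star).
case: (diag_coef0_eq01 eval_idem) => a0; [left | right];
  rewrite (diagS_const theta a_eq0 a0) //.
by apply: boolp.funext => p; apply: boolp.funext => q; rewrite if_same.
Qed.
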